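(* Let $S$ be a random variable (the stimulus) taking values in a finite set $\mathcal{S}$ with $P(s)>0$ for all $s\in\mathcal{S}$, and let $\mathbf{R}=(R_1,\ldots,R_N)$ be a random vector (the neural response) taking values in a finite product set, with joint distribution $P(s,\mathbf{r})$. Let $\mathbf{R}^{NI}$ denote the surrogate response whose conditional distribution given $S=s$ is $P^{NI}(\mathbf{r}|s)=\prod_{n=1}^N P(r_n|s)$ (with $S$ keeping its marginal distribution). Then: (i) there exist such $S$ and $\mathbf{R}$ for which there is no stimulus-independent stochastic code mapping $\mathbf{R}$ into $\mathbf{R}^{NI}$, i.e. no transition probabilities $Q(\mathbf{r}'|\mathbf{r})\ge 0$ with $\sum_{\mathbf{r}'}Q(\mathbf{r}'|\mathbf{r})=1$ for all $\mathbf{r}$ such that $P^{NI}(\mathbf{r}'|s)=\sum_{\mathbf{r}}P(\mathbf{r}|s)\,Q(\mathbf{r}'|\mathbf{r})$ for all $s$ and $\mathbf{r}'$; (ii) if $\mathbf{R}$ is noise correlated, i.e. $P(\mathbf{r}|s)\neq P^{NI}(\mathbf{r}|s)$ for some $s$ and $\mathbf{r}$, then there is no deterministic stimulus-independent function $f$ (reduced code) such that $P(f(\mathbf{R})=\mathbf{r}'\,|\,S=s)=P^{NI}(\mathbf{r}'|s)$ for all $s$ and $\mathbf{r}'$.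
   Context: A stochastic code is a code obtained from another code through stimulus-independent transition probabilities $Q(\mathbf{r}'|\mathbf{r})$ as described; a reduced code is the special case of a deterministic stimulus-independent function. The responses $R_n$ are noise independent if $P(\mathbf{r}|s)=P^{NI}(\mathbf{r}|s)$ for all $\mathbf{r},s$, and noise correlated otherwise. *)

From HB Require Import structures.
From mathcomp Require Import all_boot all_order all_algebra.
From mathcomp Require Import reals.
Set Implicit Arguments. Unset Strict Implicit. Unset Printing Implicit Defensive.
Import Order.TTheory GRing.Theory Num.Theory.
Local Open Scope ring_scope.

Notation Resp A := ({dffun forall n, A n}) (only parsing).

Section Defs.
Variables (R : realType) (S : finType) (N : nat) (A : 'I_N -> finType).
Implicit Type P : {ffun S * Resp A -> R}.

Definition is_joint P := (forall x, 0 <= P x) /\ \sum_x P x = 1.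

Definition pS P (s : S) : R := \sum_(r : Resp A) P (s, r).

Definition cond P (s : S) (r : Resp A) : R := P (s, r) / pS P s.

Definition marg P (s : S) (n : 'I_N) (a : A n) : R :=
  \sum_(r : Resp A | r n == a) cond P s r.

Definition condNI P (s : S) (r : Resp A) : R :=
  \prod_(n : 'I_N) @marg P s n (r n).

Definition noise_correlated P := exists s r, cond P s r <> condNI P s r.

(* stimulus-independent stochastic code: transition probabilities Q(r'|r) = Q r r' *)
Definition stochastic_code (Q : Resp A -> Resp A -> R) :=
  (forall r r', 0 <= Q r r') /\ (forall r, \sum_(r' : Resp A) Q r r' = 1).

Definition maps_to_NI P (Q : Resp A -> Resp A -> R) :=
  forall s r', condNI P s r' = \sum_(r : Resp A) cond P s r * Q r r'.

Definition reduced_maps_to_NI P (f : Resp A -> Resp A) :=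
  forall s r', \sum_(r : Resp A | f r == r') cond P s r = condNI P s r'.

End Defs.
Arguments marg {R S N A} P s n a.

(* (ii) Pushing P(.|s) forward along f cannot increase entropy, so
   H(P^NI(.|s)) <= H(P(.|s)).  But P(.|s) and P^NI(.|s) have the same
   single-neuron marginals and P^NI(.|s) is their product, so the cross entropy
   of P(.|s) relative to P^NI(.|s) is the sum of the marginal entropies, i.e.
   H(P^NI(.|s)).  Gibbs' inequality H(P(.|s)) <= cross entropy thus holds with
   equality, which forces P(.|s) = P^NI(.|s).
   (i) If a stimulus evokes a response r0 with certainty, then P^NI(r0|s) = 1
   too, so a stochastic code must keep r0 in place and cannot lower the
   probability of r0 under any other stimulus.  Two binary neurons, both silent
   under one stimulus and both silent or both active with equal odds under the
   other, have P(00|s) = 1/2 > 1/4 = P^NI(00|s) for the latter. *)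

From HB Require Import structures.
From mathcomp Require Import all_boot all_order all_algebra.
From mathcomp Require Import reals exp.
From mathcomp Require Import lra.
Set Implicit Arguments. Unset Strict Implicit. Unset Printing Implicit Defensive.
Import Order.TTheory GRing.Theory Num.Theory.
Local Open Scope ring_scope.

Section DependentProducts.
Variables (R : comNzRingType) (I : finType) (T_ : I -> finType).

Lemma sum_prod_dffun (G : forall i, T_ i -> R) :
  \sum_(y : {dffun forall i, T_ i}) \prod_i G i (y i) = \prod_i \sum_(b : T_ i) G i b.
Proof.
transitivity (\prod_i \sum_(j in tagged_with T_ i) untag 0 (G i) j).
  2: by apply: eq_bigr => i _; rewrite (big_tag G i).
rewrite bigA_distr_big_dep.
have := @big_fprod R 0 1 *%R +%R I T_ (fun i => [ffun b => G i b]).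
have untag_ffun (g : {ffun I -> {i : I & T_ i}}) :
    \prod_i untag 0 [ffun b => G i b] (g i) = \prod_i untag 0 (G i) (g i).
  by apply: eq_bigr => i _; rewrite /untag; case: eqP => // e; rewrite ffunE.
under [X in _ = X -> _]eq_bigr do rewrite untag_ffun.
move=> <-; rewrite (reindex (@fprod_of_dffun I T_)); last exact/onW_bij/fprod_of_dffun_bij.
by apply: eq_bigr => y _; apply: eq_bigr => i _; rewrite fprodE ffunE.
Qed.

Lemma marginal_prod_dffun (F : forall i, T_ i -> R) (n : I) (a : T_ n) :
  (forall i, i != n -> \sum_(b : T_ i) F i b = 1) ->
  \sum_(y : {dffun forall i, T_ i} | y n == a) \prod_i F i (y i) = F n a.
Proof.
move=> sumF1.
pose G i (b : T_ i) := F i b * ((i != n) || (Tagged T_ b == Tagged T_ a))%:R.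
transitivity (\sum_(y : {dffun forall i, T_ i}) \prod_i G i (y i)).
  rewrite big_mkcond /=; apply: eq_bigr => y _.
  rewrite /G big_split /= (bigD1 n) //= [X in _ = _ * X](bigD1 n) //= eqxx /= eq_Tagged /=.
  rewrite [X in _ = _ * (_ * X)]big1 => [|i ->] //.
  by case: (y n == a); rewrite ?mulr1 ?mulr0.
rewrite sum_prod_dffun (bigD1 n) //= [X in _ * X]big1 => [|i ni]; last first.
  by rewrite -(sumF1 i ni); apply: eq_bigr => b _; rewrite /G ni mulr1.
rewrite mulr1 (bigD1 a) //= big1 ?addr0 => [|b ba]; last first.
  by rewrite /G eqxx /= eq_Tagged /= (negPf ba) mulr0.
by rewrite /G eqxx /= eq_Tagged /= eqxx mulr1.
Qed.

End DependentProducts.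

Lemma pushforward_sumE (R : comNzRingType) (T U : finType) (f : T -> U)
    (p : T -> R) (q : U -> R) (g : U -> R) :
  (forall y, \sum_(t | f t == y) p t = q y) ->
  \sum_t p t * g (f t) = \sum_y q y * g y.
Proof.
move=> pushpq; rewrite (partition_big f predT) //=.
apply: eq_bigr => y _; rewrite -pushpq big_distrl /=.
by apply: eq_big => t // /eqP ->.
Qed.

Lemma sum_indicator (R : nzSemiRingType) (T : finType) (t0 : T) :
  \sum_t (t == t0)%:R = 1 :> R.
Proof. by rewrite (bigD1 t0) //= eqxx big1 ?addr0 // => t /negPf ->. Qed.

Section Entropy.
Variable R : realType.

Definition entropy (T : finType) (p : T -> R) := - \sum_t p t * ln (p t).
Definition cross_entropy (T : finType) (p q : T -> R) := - \sum_t p t * ln (q t).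

Lemma ln_lt_sub1 (z : R) : 0 < z -> z != 1 -> ln z < z - 1.
Proof.
move=> z_gt0 z_neq1.
have lnz_neq0 : ln z != 0 by rewrite ln_eq0.
by have := expR_gt1Dx lnz_neq0; rewrite lnK ?posrE //; lra.
Qed.

Lemma mul_ln_leif (x y : R) : 0 <= x -> 0 <= y -> (0 < x -> 0 < y) ->
  x * ln y <= x * ln x + (y - x) ?= iff (x == y).
Proof.
move=> x_ge0 y_ge0 x_gt0_y_gt0; apply/leifP.
have [<-|x_neq_y] := eqVneq x y; first by rewrite subrr addr0.
have [x0|x_neq0] := eqVneq x 0.
  by rewrite x0 !mul0r subr0 add0r lt_neqAle y_ge0 andbT -x0.
have x_gt0 : 0 < x by rewrite lt_neqAle eq_sym x_neq0.
have y_gt0 := x_gt0_y_gt0 x_gt0.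
have -> : x * ln y = x * ln x + x * ln (y / x).
  by rewrite ln_div ?posrE // mulrBr addrC subrK.
have -> : y - x = x * (y / x - 1) by rewrite mulrBr mulr1 mulrCA divff ?mulr1.
rewrite ltrD2l ltr_pM2l // ln_lt_sub1 ?divr_gt0 //.
by apply: contra x_neq_y => /eqP/(congr1 ( *%R^~ x))/=; rewrite divfK // mul1r => ->.
Qed.

Section Gibbs.
Variables (T : finType) (p q : T -> R).
Hypotheses (p_ge0 : forall t, 0 <= p t) (q_ge0 : forall t, 0 <= q t).
Hypothesis supp_pq : forall t, 0 < p t -> 0 < q t.

Lemma gibbs_eq : \sum_t q t = \sum_t p t ->
  cross_entropy p q <= entropy p -> p =1 q.
Proof.
move=> sum_qp; rewrite /entropy /cross_entropy lerN2 => le_qp t.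
have := leif_sum (P := predT) (fun i _ => mul_ln_leif (p_ge0 i) (q_ge0 i) (@supp_pq i)).
rewrite big_split /= sumrB sum_qp subrr addr0 => -[le_pq].
by rewrite eq_le le_pq le_qp => /esym/forallP/(_ t)/eqP.
Qed.

End Gibbs.

Lemma entropy_pushforward (T U : finType) (f : T -> U) (p : T -> R) (q : U -> R) :
  (forall t, 0 <= p t) -> (forall y, \sum_(t | f t == y) p t = q y) ->
  entropy q <= entropy p.
Proof.
move=> p_ge0 pushpq; rewrite /entropy lerN2.
rewrite -(pushforward_sumE (fun y => ln (q y)) pushpq); apply: ler_sum => t _.
have [->|pt_neq0] := eqVneq (p t) 0; first by rewrite !mul0r.
have pt_gt0 : 0 < p t by rewrite lt_neqAle eq_sym pt_neq0 p_ge0.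
have le_pq : p t <= q (f t) by rewrite -pushpq (bigD1 t) //= lerDl sumr_ge0.
by rewrite ler_wpM2l // ler_ln ?posrE // (lt_le_trans pt_gt0).
Qed.

Lemma ln_prod (I : Type) (s : seq I) (F : I -> R) :
  (forall i, 0 < F i) -> ln (\prod_(i <- s) F i) = \sum_(i <- s) ln (F i).
Proof.
move=> F_gt0; elim: s => [|i s IHs]; first by rewrite !big_nil ln1.
by rewrite !big_cons lnM ?IHs // posrE // prodr_gt0.
Qed.

Lemma cross_entropy_prod (I : finType) (T_ : I -> finType)
    (w : {dffun forall i, T_ i} -> R) (m : forall i, T_ i -> R) :
  (forall y, w y != 0 -> forall i, 0 < m i (y i)) ->
  (forall i a, \sum_(y : {dffun forall i, T_ i} | y i == a) w y = m i a) ->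
  cross_entropy w (fun y => \prod_i m i (y i)) = \sum_i entropy (m i).
Proof.
move=> m_gt0 marg_w; rewrite /cross_entropy /entropy sumrN; congr (- _).
transitivity (\sum_y \sum_i w y * ln (m i (y i))).
  apply: eq_bigr => y _; have [->|wy_neq0] := eqVneq (w y) 0.
    by rewrite mul0r big1 // => i _; rewrite mul0r.
  by rewrite ln_prod ?big_distrr // => i; apply: m_gt0.
rewrite exchange_big; apply: eq_bigr => i _.
exact: (pushforward_sumE (fun a => ln (m i a)) (marg_w i)).
Qed.

End Entropy.

Section ConditionalDistributions.
Variables (R : realType) (S : finType) (N : nat) (A : 'I_N -> finType).
Variables (P : {ffun S * Resp A -> R}) (s : S).
Hypotheses (P_ge0 : forall x, 0 <= P x) (pS_gt0 : 0 < pS P s).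

Lemma cond_ge0 r : 0 <= cond P s r.
Proof. by rewrite divr_ge0 // ltW. Qed.

Lemma sum_cond : \sum_r cond P s r = 1.
Proof. by rewrite -big_distrl /= mulfV ?gt_eqF. Qed.

Lemma cond_le_marg r n : cond P s r <= marg P s n (r n).
Proof. by rewrite /marg (bigD1 r) //= lerDl sumr_ge0 // => r' _; apply: cond_ge0. Qed.

Lemma marg_ge0 n a : 0 <= marg P s n a.
Proof. by rewrite sumr_ge0 // => r _; apply: cond_ge0. Qed.

Lemma sum_marg n : \sum_a marg P s n a = 1.
Proof.
by rewrite -sum_cond (partition_big (fun r : Resp A => r n) predT).
Qed.

Lemma condNI_gt0 r : 0 < cond P s r -> 0 < condNI P s r.
Proof. by move=> cond_gt0; rewrite prodr_gt0 // => n _; apply: lt_le_trans (cond_le_marg r n). Qed.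

Lemma marg_condNI n a : \sum_(r : Resp A | r n == a) condNI P s r = marg P s n a.
Proof. exact: marginal_prod_dffun (fun i _ => sum_marg i). Qed.

Lemma cross_entropy_cond_condNI :
  cross_entropy (cond P s) (condNI P s) = entropy (condNI P s).
Proof.
rewrite [RHS](cross_entropy_prod _ marg_condNI); last first.
  move=> r condNI_neq0 n; rewrite lt_neqAle marg_ge0 andbT eq_sym.
  by apply: contra condNI_neq0 => /eqP marg0; rewrite /condNI (bigD1 n) //= marg0 mul0r.
apply: cross_entropy_prod => // r cond_neq0 n.
by apply: lt_le_trans (cond_le_marg r n); rewrite lt_neqAle eq_sym cond_neq0 cond_ge0.
Qed.

End ConditionalDistributions.

Lemma reduced_code_noise_independent (R : realType) (S : finType) (N : nat)
    (A : 'I_N -> finType) (P : {ffun S * Resp A -> R}) (f : Resp A -> Resp A) s :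
  (forall x, 0 <= P x) -> 0 < pS P s -> reduced_maps_to_NI P f ->
  cond P s =1 condNI P s.
Proof.
move=> P_ge0 pS_gt0 f_NI.
have cond_ge0 := cond_ge0 P_ge0 pS_gt0.
have condNI_ge0 r : 0 <= condNI P s r by rewrite -(f_NI s) sumr_ge0.
apply: gibbs_eq => //; first exact: condNI_gt0.
- by rewrite [RHS](partition_big f predT) //; apply: eq_bigr => y _; rewrite -f_NI.
- by rewrite cross_entropy_cond_condNI // (entropy_pushforward cond_ge0 (f_NI s)).
Qed.

Lemma condNI_point_mass (R : realType) (S : finType) (N : nat) (A : 'I_N -> finType)
    (P : {ffun S * Resp A -> R}) s r0 :
  (forall r, cond P s r = (r == r0)%:R) -> condNI P s r0 = 1.
Proof.
move=> cond_r0; rewrite /condNI big1 // => n _.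
rewrite /marg (bigD1 r0) //= cond_r0 eqxx big1 ?addr0 // => r /andP[_ /negPf].
by rewrite cond_r0 => ->.
Qed.

Lemma maps_to_NI_point_mass_le (R : realType) (S : finType) (N : nat)
    (A : 'I_N -> finType) (P : {ffun S * Resp A -> R}) (Q : Resp A -> Resp A -> R)
    s1 s2 r0 :
  (forall x, 0 <= P x) -> 0 < pS P s2 -> (forall r, 0 <= Q r r0) -> maps_to_NI P Q ->
  (forall r, cond P s1 r = (r == r0)%:R) -> cond P s2 r0 <= condNI P s2 r0.
Proof.
move=> P_ge0 pS_gt0 Q_ge0 Q_NI cond_r0.
have Q_r0 : Q r0 r0 = 1.
  rewrite -(condNI_point_mass cond_r0) Q_NI (bigD1 r0) //= cond_r0 eqxx mul1r.
  by rewrite big1 ?addr0 // => r /negPf r_neq; rewrite cond_r0 r_neq mul0r.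
rewrite Q_NI (bigD1 r0) //= Q_r0 mulr1 lerDl sumr_ge0 // => r _.
by rewrite mulr_ge0 ?cond_ge0.
Qed.

Section Example.
Variable R : realType.

Definition B2 : 'I_2 -> finType := fun _ => bool.
Definition r00 : Resp B2 := [ffun=> false].
Definition r11 : Resp B2 := [ffun=> true].

Definition Pex : {ffun bool * Resp B2 -> R} :=
  [ffun x => if x.1 then (x.2 == r00)%:R / 2 else ((x.2 == r00) + (x.2 == r11))%:R / 4].

Lemma Pex_ge0 x : 0 <= Pex x.
Proof. by rewrite ffunE; case: ifP => _; rewrite divr_ge0. Qed.

Lemma r11_neq_r00 : r11 != r00.
Proof. by apply/eqP => /ffunP/(_ ord0); rewrite !ffunE. Qed.

Lemma pS_Pex s : pS Pex s = 1 / 2.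
Proof.
rewrite /pS; under eq_bigr do rewrite ffunE /=.
case: s; rewrite -big_distrl /=; last under eq_bigr do rewrite natrD.
  by rewrite sum_indicator.
rewrite big_split /= !sum_indicator; lra.
Qed.

Lemma pS_Pex_gt0 s : 0 < pS Pex s.
Proof. by rewrite pS_Pex; lra. Qed.

Lemma cond_Pex_true r : cond Pex true r = (r == r00)%:R.
Proof. by rewrite /cond pS_Pex ffunE /=; case: (r == r00); lra. Qed.

Lemma cond_Pex_false r : cond Pex false r = ((r == r00) + (r == r11))%:R / 2.
Proof. by rewrite /cond pS_Pex ffunE /=; case: (_ + _)%N => [|k]; lra. Qed.

Lemma condNI_Pex_false : condNI Pex false r00 = 1 / 4.
Proof.
have marg_false n : marg Pex false n false = 1 / 2.
  rewrite /marg (bigD1 r00) ?ffunE //= cond_Pex_false eqxx eq_sym (negPf r11_neq_r00).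
  rewrite big1 ?addr0 => [//|r /andP[r_n /negPf r_neq00]].
  have /negPf r_neq11 : r != r11 by apply: contraTneq r_n => ->; rewrite ffunE.
  by rewrite cond_Pex_false r_neq00 r_neq11 mul0r.
rewrite /condNI (eq_bigr (fun _ => 1 / 2)) => [|n _]; last by rewrite ffunE marg_false.
rewrite prodr_const card_ord; lra.
Qed.

Lemma Pex_no_stochastic_code :
  ~ exists Q, stochastic_code Q /\ maps_to_NI Pex Q.
Proof.
move=> [Q [[Q_ge0 _] Q_NI]].
have := maps_to_NI_point_mass_le Pex_ge0 (pS_Pex_gt0 false) (Q_ge0^~ r00) Q_NI cond_Pex_true.
rewrite cond_Pex_false eqxx eq_sym (negPf r11_neq_r00) condNI_Pex_false /= addn0; lra.
Qed.

Lemma is_joint_Pex : is_joint Pex.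
Proof.
split; first exact: Pex_ge0.
transitivity (\sum_s pS Pex s); first by rewrite pair_bigA; apply: eq_bigr => -[].
by rewrite big_bool /= !pS_Pex; lra.
Qed.

End Example.

Theorem theorem1 (R : realType) :
  (exists (S : finType) (N : nat) (A : 'I_N -> finType)
          (P : {ffun S * Resp A -> R}),
      is_joint P /\ (forall s, 0 < pS P s) /\
      ~ (exists Q : Resp A -> Resp A -> R, stochastic_code Q /\ maps_to_NI P Q))
  /\
  (forall (S : finType) (N : nat) (A : 'I_N -> finType)
          (P : {ffun S * Resp A -> R}),
      is_joint P -> (forall s, 0 < pS P s) -> noise_correlated P ->
      ~ (exists f : Resp A -> Resp A, reduced_maps_to_NI P f)).
Proof.
split.
  exists bool, 2, B2, (Pex R).
  by split; [exact: is_joint_Pex | split; [exact: pS_Pex_gt0 | exact: Pex_no_stochastic_code]].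
move=> S N A P [P_ge0 _] pS_gt0 [s [r cond_neq]] [f f_NI].
exact: cond_neq (reduced_code_noise_independent P_ge0 (pS_gt0 s) f_NI r).
Qed.
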